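(* Let $r=\max\{\eta_a,\eta_b\}$, $\alpha=\max\{\sigma_{\max}(U):U\in B(V_*,r)\}$, $L=6\alpha^2\max\{|\lambda_1|,|\lambda_{\max}|\}$ and $\hat L=\frac{2L}{3\alpha}$. Then for all $U_i,U_j\in B(V_*,r)$, $$\|\mathcal{A}_{U_i}U_i-\mathcal{A}_{U_j}U_j\|\leqslant L\|U_i-U_j\|,\qquad \|\mathcal{A}_{U_i}-\mathcal{A}_{U_j}\|\leqslant\hat L\|U_i-U_j\|.$$
   Context: Let $\mathcal{V}^{N_g}$ be a real Hilbert space of finite dimension $N_g$ with inner product $(\cdot,\cdot)$, and let $H:\mathcal{V}^{N_g}\to\mathcal{V}^{N_g}$ be a self-adjoint linear operator with eigenvalues $\lambda_1\leqslant\cdots\leqslant\lambda_{N_g}$, $\lambda_{\max}=\lambda_{N_g}$, $\lambda_1<0$. Fix $N<N_g$ with $\lambda_N<\lambda_{N+1}$. Elements of $(\mathcal{V}^{N_g})^N$ are written $U=(u_1,\dots,u_N)$; $U^\top V=((u_i,v_j))_{i,j=1}^N$; for a real $N\times N$ matrix $A=(a_{kj})$, $UA$ has $j$-th component $\sum_k a_{kj}u_k$; $HU=(Hu_1,\dots,Hu_N)$; $\|U\|=\operatorname{tr}(U^\top U)^{1/2}$; $\sigma_{\max}(U)=\sqrt{\lambda_{\max}(U^\top U)}$. Set $\nabla E(U)=HU$. For $U$, $\mathcal{A}_U=\nabla E(U)U^\top-U\nabla E(U)^\top$ is the linear operator on $\mathcal{V}^{N_g}$ given by $\mathcal{A}_Uw=\sum_{i=1}^N\big(Hu_i\,(u_i,w)-u_i\,(Hu_i,w)\big)$,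 applied componentwise to elements of $(\mathcal{V}^{N_g})^N$; for linear operators on $\mathcal{V}^{N_g}$, $\|\cdot\|$ is the Hilbert–Schmidt norm (so $\|\mathcal{A}_U\|^2=-\operatorname{tr}(\mathcal{A}_U^2)$). Let $V_*$ satisfy $V_*^\top V_*=I_N$, $HV_*=V_*\operatorname{diag}(\lambda_1,\dots,\lambda_N)$. $\mathcal{O}^N$ denotes the $N\times N$ orthogonal matrices, $\operatorname{dist}([U],[V_*])=\inf_{Q\in\mathcal{O}^N}\|UQ-V_*\|$, $B(U,\eta)=\{W:\|W-U\|\leqslant\eta\}$, $B([V_*],\eta)=\{W:\operatorname{dist}([W],[V_*])\leqslant\eta\}$. Fix constants $\eta_a,\eta_b,\delta^*>0$ such that (as asserted in the paper) there is a unique function $\hat g:B(V_*,\eta_a)\times[0,\delta^*]\to B(V_*,\eta_b)$ with $\hat g(U,s)-U=-s\,\mathcal{A}_{\frac{\hat g(U,s)+U}{2}}\frac{\hat g(U,s)+U}{2}$, and a unique function $g:B([V_*],\eta_a)\times[0,\delta^*]\to B([V_*],\eta_b)$ with $g(U,s)=\hat g(U,s)-s\nabla E(\hat g(U,s))(I_N-\hat g(U,s)^\top\hat g(U,s))$. *)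

From HB Require Import structures.
From mathcomp Require Import all_boot all_order all_algebra.
From mathcomp Require Import all_classical all_reals.
Set Implicit Arguments. Unset Strict Implicit. Unset Printing Implicit Defensive.
Import Order.TTheory GRing.Theory Num.Theory.
Local Open Scope ring_scope.
Local Open Scope classical_set_scope.

(* The Hilbert space V^{N_g} is modelled as R^{N_g} (column vectors) with the
   standard inner product; an element U of (V^{N_g})^N is an N_g x N matrix
   whose j-th column is u_j. Then U^T V is the matrix transpose product, UA is
   the matrix product, HU is H *m U. *)

(* Frobenius norm ||U|| = tr(U^T U)^{1/2}; on square matrices (operators) this
   is the Hilbert-Schmidt norm. *)
Definition frob (R : realType) (m n : nat) (U : 'M[R]_(m, n)) : R :=
  Num.sqrt (\tr (U^T *m U)).

Definition lambda_max (R : realType) (n : nat) (A : 'M[R]_n) : R :=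
  sup [set a : R | eigenvalue A a].

Definition sigma_max (R : realType) (m n : nat) (U : 'M[R]_(m, n)) : R :=
  Num.sqrt (lambda_max (U^T *m U)).

Definition opA (R : realType) (Ng N : nat) (H : 'M[R]_Ng) (U : 'M[R]_(Ng, N))
  : 'M[R]_Ng := (H *m U) *m U^T - U *m (H *m U)^T.

Definition mball (R : realType) (m n : nat) (U : 'M[R]_(m, n)) (eta : R)
  : set 'M[R]_(m, n) := [set W | frob (W - U) <= eta].

Definition ghat_prop (R : realType) (Ng N : nat) (H : 'M[R]_Ng)
  (Vs : 'M[R]_(Ng, N)) (eta_a eta_b delta : R)
  (gh : 'M[R]_(Ng, N) -> R -> 'M[R]_(Ng, N)) : Prop :=
  forall U s, mball Vs eta_a U -> 0 <= s <= delta ->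
    mball Vs eta_b (gh U s) /\
    gh U s - U = - (s *: (opA H ((2%:R)^-1 *: (gh U s + U))
                          *m ((2%:R)^-1 *: (gh U s + U)))).

From HB Require Import structures.
From mathcomp Require Import all_boot all_order all_algebra.
From mathcomp Require Import all_classical all_reals.
From mathcomp Require Import ring lra.
Set Implicit Arguments. Unset Strict Implicit. Unset Printing Implicit Defensive.
Import Order.TTheory GRing.Theory Num.Theory.
Local Open Scope ring_scope.
Local Open Scope classical_set_scope.

(* Write D = Ui - Uj. Both A_U U = H U U^T U - U (U^T H) U and
   A_U = H U U^T - U (U^T H) are differences of products; telescoping puts D
   in exactly one factor, and the Frobenius norm of a product is at most that
   of this factor times the operator norms of the others.  On the ball these
   are at most alpha for U and U^T and max(|lam 1|, |lam Ng|) for H, which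
   gives the constants L and 4 alpha max(|lam 1|, |lam Ng|) = Lhat; alpha is
   positive since alpha >= sigma_max V_* = 1.
   That sigma_max U bounds the operator norm of U needs lambda_max (U^T U) to
   be rho = sup ||U x||^2 over unit vectors x.  We avoid the spectral theorem:
   rho I - U^T U is positive semidefinite with infimum 0 on the unit sphere,
   hence singular, so rho is an eigenvalue. *)

Lemma quadratic_ge0_discr (R : realType) (a b c : R) : 0 <= c ->
  (forall t, 0 <= a + 2%:R * b * t + c * t ^+ 2) -> b ^+ 2 <= a * c.
Proof.
move=> c_ge0 q_ge0.
have [c0|c_neq0] := eqVneq c 0.
  have [->|b_neq0] := eqVneq b 0; first by rewrite c0 expr0n /= mulr0.
  have := q_ge0 (- (a + 1) / (2%:R * b)); rewrite c0 mul0r addr0.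
  have -> : 2%:R * b * (- (a + 1) / (2%:R * b)) = - (a + 1) by field; rewrite b_neq0.
  lra.
have c_gt0 : 0 < c by rewrite lt_def c_neq0.
have := q_ge0 (- b / c).
have -> : a + 2%:R * b * (- b / c) + c * (- b / c) ^+ 2 = a - b ^+ 2 / c.
  by field.
by rewrite subr_ge0 ler_pdivrMr.
Qed.

Lemma subrACA (V : zmodType) (x y z t : V) : x - y - (z - t) = x - z - (y - t).
Proof. by rewrite !opprD !opprK addrACA. Qed.

Section Frobenius.
Variable R : realType.

Definition frobdot m n (X Y : 'M[R]_(m, n)) : R := \tr (X^T *m Y).

Lemma frobdotE m n (X Y : 'M[R]_(m, n)) : frobdot X Y = \sum_i \sum_j X i j * Y i j.
Proof.
rewrite /frobdot /mxtrace exchange_big /=; apply: eq_bigr => j _.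
by rewrite mxE; apply: eq_bigr => i _; rewrite mxE.
Qed.

Lemma frobdotC m n (X Y : 'M[R]_(m, n)) : frobdot X Y = frobdot Y X.
Proof. by rewrite !frobdotE; apply: eq_bigr => i _; apply: eq_bigr => j _; rewrite mulrC. Qed.

Lemma frobdotDr m n (X Y Z : 'M[R]_(m, n)) : frobdot X (Y + Z) = frobdot X Y + frobdot X Z.
Proof. by rewrite /frobdot mulmxDr mxtraceD. Qed.

Lemma frobdotDl m n (X Y Z : 'M[R]_(m, n)) : frobdot (Y + Z) X = frobdot Y X + frobdot Z X.
Proof. by rewrite frobdotC frobdotDr !(frobdotC X). Qed.

Lemma frobdotZr m n a (X Y : 'M[R]_(m, n)) : frobdot X (a *: Y) = a * frobdot X Y.
Proof. by rewrite /frobdot -scalemxAr mxtraceZ. Qed.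

Lemma frobdotZl m n a (X Y : 'M[R]_(m, n)) : frobdot (a *: X) Y = a * frobdot X Y.
Proof. by rewrite frobdotC frobdotZr frobdotC. Qed.

Lemma frobdotNr m n (X Y : 'M[R]_(m, n)) : frobdot X (- Y) = - frobdot X Y.
Proof. by rewrite -scaleN1r frobdotZr mulN1r. Qed.

Lemma frobdotNl m n (X Y : 'M[R]_(m, n)) : frobdot (- X) Y = - frobdot X Y.
Proof. by rewrite frobdotC frobdotNr frobdotC. Qed.

Lemma frobdot_mull m n p (M : 'M[R]_(m, n)) (X : 'M[R]_(n, p)) Y :
  frobdot (M *m X) Y = frobdot X (M^T *m Y).
Proof. by rewrite /frobdot trmx_mul mulmxA. Qed.

Lemma frobdot_ge0 m n (X : 'M[R]_(m, n)) : 0 <= frobdot X X.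
Proof.
by rewrite frobdotE; apply: sumr_ge0 => i _; apply: sumr_ge0 => j _; rewrite -expr2 sqr_ge0.
Qed.

Lemma frobdot_eq0 m n (X : 'M[R]_(m, n)) : (frobdot X X == 0) = (X == 0).
Proof.
apply/idP/eqP => [|->]; last first.
  by rewrite frobdotE big1 // => i _; rewrite big1 // => j _; rewrite mxE mulr0.
rewrite frobdotE psumr_eq0 => [/allP X0|i _]; last first.
  by apply: sumr_ge0 => j _; rewrite -expr2 sqr_ge0.
apply/matrixP => i j; have /X0 := mem_index_enum i.
rewrite /= psumr_eq0 => [/allP/(_ j (mem_index_enum j))|k _]; last by rewrite -expr2 sqr_ge0.
by rewrite mulf_eq0 orbb mxE => /eqP.
Qed.

Lemma psd_cauchy_schwarz n p (B : 'M[R]_n) : B^T = B ->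
  (forall x : 'M[R]_(n, p), 0 <= frobdot x (B *m x)) ->
  forall x y : 'M[R]_(n, p), frobdot x (B *m y) ^+ 2 <= frobdot x (B *m x) * frobdot y (B *m y).
Proof.
move=> BT B_psd x y; apply: quadratic_ge0_discr => [|t]; first exact: B_psd.
have B_sym : frobdot y (B *m x) = frobdot x (B *m y).
  by rewrite -{1}BT -frobdot_mull frobdotC.
have := B_psd (x + t *: y).
by rewrite mulmxDr -scalemxAr frobdotDl !frobdotDr !frobdotZl !frobdotZr B_sym; lra.
Qed.

Lemma frobdot_CS m n (X Y : 'M[R]_(m, n)) : frobdot X Y ^+ 2 <= frobdot X X * frobdot Y Y.
Proof.
have psd1 (x : 'M[R]_(m, n)) : 0 <= frobdot x (1%:M *m x) by rewrite mul1mx frobdot_ge0.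
by have := psd_cauchy_schwarz (trmx1 R m) psd1 X Y; rewrite !mul1mx.
Qed.

Lemma frob0 m n : frob (0 : 'M[R]_(m, n)) = 0.
Proof. by rewrite /frob mulmx0 linear0 sqrtr0. Qed.

Lemma frob_ge0 m n (X : 'M[R]_(m, n)) : 0 <= frob X.
Proof. exact: sqrtr_ge0. Qed.

Lemma frob_sqr m n (X : 'M[R]_(m, n)) : frob X ^+ 2 = frobdot X X.
Proof. by rewrite sqr_sqrtr // frobdot_ge0. Qed.

Lemma frob_eq0 m n (X : 'M[R]_(m, n)) : (frob X == 0) = (X == 0).
Proof. by rewrite -frobdot_eq0 -frob_sqr sqrf_eq0. Qed.

Lemma frobdot_le_frob m n (X Y : 'M[R]_(m, n)) : frobdot X Y <= frob X * frob Y.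
Proof.
have [XY_le0|XY_gt0] := lerP (frobdot X Y) 0.
  by apply: le_trans XY_le0 _; rewrite mulr_ge0 ?frob_ge0.
rewrite -(ler_pXn2r (n:=2)) ?nnegrE ?mulr_ge0 ?frob_ge0 ?(ltW XY_gt0) //.
by rewrite exprMn !frob_sqr frobdot_CS.
Qed.

Lemma frobD m n (X Y : 'M[R]_(m, n)) : frob (X + Y) <= frob X + frob Y.
Proof.
rewrite -(ler_pXn2r (n:=2)) ?nnegrE ?addr_ge0 ?frob_ge0 //.
rewrite frob_sqr frobdotDl !frobdotDr (frobdotC Y X) sqrrD !frob_sqr.
by have := frobdot_le_frob X Y; lra.
Qed.

Lemma frobN m n (X : 'M[R]_(m, n)) : frob (- X) = frob X.
Proof. by rewrite /frob -/(frobdot _ _) frobdotNl frobdotNr opprK. Qed.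

Lemma frobB m n (X Y : 'M[R]_(m, n)) : frob (X - Y) <= frob X + frob Y.
Proof. by rewrite -(frobN Y); apply: frobD. Qed.

Lemma frobZ m n a (X : 'M[R]_(m, n)) : frob (a *: X) = `|a| * frob X.
Proof.
rewrite /frob -!/(frobdot _ _) frobdotZl frobdotZr mulrA -expr2.
by rewrite sqrtrM ?sqr_ge0 // sqrtr_sqr.
Qed.

Lemma frob_tr m n (X : 'M[R]_(m, n)) : frob X^T = frob X.
Proof. by rewrite /frob trmxK mxtrace_mulC. Qed.

Lemma frob_mulmx_psd n p (B : 'M[R]_n) rho : B^T = B -> 0 <= rho ->
  (forall y : 'M[R]_(n, p), 0 <= frobdot y (B *m y) <= rho * frob y ^+ 2) ->
  forall x : 'M[R]_(n, p), frob (B *m x) ^+ 2 <= rho * frobdot x (B *m x).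
Proof.
move=> BT rho_ge0 B_form x.
have B_psd (y : 'M[R]_(n, p)) : 0 <= frobdot y (B *m y) by have /andP[] := B_form y.
have BBx_le : frobdot (B *m x) (B *m (B *m x)) <= rho * frob (B *m x) ^+ 2.
  by have /andP[] := B_form (B *m x).
have BBx : frobdot x (B *m (B *m x)) = frob (B *m x) ^+ 2.
  by rewrite frob_sqr frobdot_mull BT.
have := psd_cauchy_schwarz BT B_psd x (B *m x); rewrite BBx.
have := mulr_ge0 rho_ge0 (B_psd x); have := B_psd x; have := sqr_ge0 (frob (B *m x)).
nra.
Qed.

Lemma frob_sqr_col m n (X : 'M[R]_(m, n)) : frob X ^+ 2 = \sum_j frob (col j X) ^+ 2.
Proof.
rewrite frob_sqr frobdotE exchange_big; apply: eq_bigr => j _.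
by rewrite frob_sqr frobdotE; apply: eq_bigr => i _; rewrite big_ord1 !mxE.
Qed.

Lemma frob_sqr_row m n (X : 'M[R]_(m, n)) : frob X ^+ 2 = \sum_i frob (row i X) ^+ 2.
Proof.
rewrite frob_sqr frobdotE; apply: eq_bigr => i _.
by rewrite frob_sqr frobdotE big_ord1; apply: eq_bigr => j _; rewrite !mxE.
Qed.

Lemma frob_mulmx_rowcol n (r : 'rV[R]_n) (x : 'cV[R]_n) :
  frob (r *m x) ^+ 2 <= frob r ^+ 2 * frob x ^+ 2.
Proof.
have -> : frob (r *m x) ^+ 2 = frobdot r^T x ^+ 2.
  rewrite frob_sqr !frobdotE !big_ord1 -expr2 !mxE; congr (_ ^+ 2).
  by apply: eq_bigr => k _; rewrite big_ord1 mxE.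
by rewrite -[frob r]frob_tr !frob_sqr frobdot_CS.
Qed.

End Frobenius.

Section OperatorBound.
Variable R : realType.

Definition opbound m n (M : 'M[R]_(m, n)) (c : R) :=
  forall p (B : 'M[R]_(n, p)), frob (M *m B) <= c * frob B.

Lemma opbound_col m n (M : 'M[R]_(m, n)) c : 0 <= c ->
  (forall x : 'cV[R]_n, frob (M *m x) <= c * frob x) -> opbound M c.
Proof.
move=> c_ge0 Mc p B; rewrite -(ler_pXn2r (n:=2)) ?nnegrE ?mulr_ge0 ?frob_ge0 //.
rewrite exprMn !frob_sqr_col mulr_sumr; apply: ler_sum => j _.
rewrite !colE -mulmxA -exprMn ler_pXn2r ?nnegrE ?mulr_ge0 ?frob_ge0 //.
Qed.

Lemma opbound_frob m n (M : 'M[R]_(m, n)) : opbound M (frob M).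
Proof.
apply: opbound_col (frob_ge0 M) _ => x.
rewrite -(ler_pXn2r (n:=2)) ?nnegrE ?mulr_ge0 ?frob_ge0 //.
rewrite exprMn frob_sqr_row (frob_sqr_row M) mulr_suml; apply: ler_sum => i _.
by rewrite row_mul frob_mulmx_rowcol.
Qed.

Lemma opbound_le m n (M : 'M[R]_(m, n)) a b : opbound M a -> a <= b -> opbound M b.
Proof.
by move=> Ma le_ab p B; apply: le_trans (Ma p B) _; rewrite ler_wpM2r ?frob_ge0.
Qed.

Lemma opbound_tr m n (M : 'M[R]_(m, n)) c : 0 <= c -> opbound M c -> opbound M^T c.
Proof.
move=> c_ge0 Mc p B; set f := frob (M^T *m B).
have f_ge0 : 0 <= f by exact: frob_ge0.
have : f ^+ 2 <= c * frob B * f.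
  rewrite frob_sqr frobdot_mull trmxK (mulrC c) -mulrA.
  apply: le_trans (frobdot_le_frob _ _) _.
  by rewrite ler_wpM2l ?frob_ge0 ?Mc.
by have := mulr_ge0 c_ge0 (frob_ge0 B); nra.
Qed.

Lemma opbound_mulmxr m n p (M : 'M[R]_(m, n)) (B : 'M[R]_(p, m)) c :
  opbound M^T c -> frob (B *m M) <= c * frob B.
Proof. by move=> MTc; rewrite -frob_tr trmx_mul -(frob_tr B). Qed.

Lemma opbound_mulmx m n p (A : 'M[R]_(m, n)) (B : 'M[R]_(n, p)) a b :
  0 <= a -> opbound A a -> opbound B b -> opbound (A *m B) (a * b).
Proof.
move=> a_ge0 Aa Bb q C; rewrite -mulmxA -mulrA.
by apply: le_trans (Aa _ _) _; rewrite ler_wpM2l.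
Qed.

Lemma frob_isometry m n p (P : 'M[R]_(m, n)) (B : 'M[R]_(n, p)) :
  P^T *m P = 1%:M -> frob (P *m B) = frob B.
Proof. by move=> PTP; rewrite /frob trmx_mul -mulmxA (mulmxA P^T) PTP mul1mx. Qed.

Lemma opbound_isometry m n (P : 'M[R]_(m, n)) : P^T *m P = 1%:M -> opbound P 1.
Proof. by move=> PTP p B; rewrite frob_isometry // mul1r. Qed.

Lemma opbound_diag n (d : 'rV[R]_n) h : 0 <= h -> (forall i, `|d 0 i| <= h) ->
  opbound (diag_mx d) h.
Proof.
move=> h_ge0 dh p B; rewrite -(ler_pXn2r (n:=2)) ?nnegrE ?mulr_ge0 ?frob_ge0 //.
rewrite exprMn !frob_sqr !frobdotE mulr_sumr; apply: ler_sum => i _.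
rewrite mulr_sumr; apply: ler_sum => j _; rewrite mul_diag_mx mxE -!expr2 exprMn.
by rewrite ler_wpM2r ?sqr_ge0 // -real_normK ?num_real // lerXn2r ?nnegrE.
Qed.

Lemma opbound_orthodiag n (P : 'M[R]_n) (d : 'rV[R]_n) h : 0 <= h ->
  P^T *m P = 1%:M -> (forall i, `|d 0 i| <= h) -> opbound (P *m diag_mx d *m P^T) h.
Proof.
move=> h_ge0 PTP dh; have P1 := opbound_isometry PTP.
have -> : h = 1 * h * 1 by rewrite mul1r mulr1.
apply: opbound_mulmx; first by rewrite mul1r.
  exact: opbound_mulmx (opbound_diag h_ge0 dh).
exact: opbound_tr.
Qed.

Lemma frob_mulmxB m n p (X1 X2 : 'M[R]_(m, n)) (Y1 Y2 : 'M[R]_(n, p)) x y dx dy :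
  0 <= x -> 0 <= y -> opbound X2 x -> opbound Y1 y ->
  frob (X1 - X2) <= dx -> frob (Y1 - Y2) <= dy ->
  frob (X1 *m Y1 - X2 *m Y2) <= dx * y + x * dy.
Proof.
move=> x_ge0 y_ge0 X2x Y1y dX dY.
have -> : X1 *m Y1 - X2 *m Y2 = (X1 - X2) *m Y1 + X2 *m (Y1 - Y2).
  by rewrite mulmxBl mulmxBr addrA subrK.
apply: le_trans (frobD _ _) (lerD _ _).
  apply: le_trans (opbound_mulmxr _ (opbound_tr y_ge0 Y1y)) _.
  by rewrite [dx * y]mulrC ler_wpM2l.
by apply: le_trans (X2x _ (Y1 - Y2)) _; rewrite ler_wpM2l.
Qed.

Lemma frob_mulmx3B m n p q (X1 X2 : 'M[R]_(m, n)) (Y1 Y2 : 'M[R]_(n, p))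
    (Z1 Z2 : 'M[R]_(p, q)) x y z dx dy dz :
  0 <= x -> 0 <= y -> 0 <= z ->
  opbound X2 x -> opbound Y1 y -> opbound Y2 y -> opbound Z1 z ->
  frob (X1 - X2) <= dx -> frob (Y1 - Y2) <= dy -> frob (Z1 - Z2) <= dz ->
  frob (X1 *m Y1 *m Z1 - X2 *m Y2 *m Z2) <= dx * y * z + x * dy * z + x * y * dz.
Proof.
move=> x_ge0 y_ge0 z_ge0 X2x Y1y Y2y Z1z dX dY dZ.
rewrite -mulrDl; apply: frob_mulmxB (mulr_ge0 x_ge0 y_ge0) z_ge0 _ Z1z _ dZ.
  exact: opbound_mulmx.
exact: frob_mulmxB.
Qed.

End OperatorBound.

Section SpectralNorm.
Variable R : realType.

Definition rayleigh_sup m n (U : 'M[R]_(m, n)) : R :=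
  sup [set frob (U *m x) ^+ 2 | x in [set x : 'cV[R]_n | frob x = 1]].

Lemma lambda_max_scalar n (a : R) : (0 < n)%N -> lambda_max (a%:M : 'M[R]_n) = a.
Proof.
move=> n_gt0; rewrite /lambda_max.
suff -> : [set b : R | eigenvalue (a%:M : 'M[R]_n) b] = [set a] by rewrite sup1.
apply/seteqP; split=> b /=.
  move=> /eigenvalueP[v]; rewrite mul_mx_scalar => /eqP.
  rewrite -subr_eq0 -scalerBl scaler_eq0 subr_eq0 => /orP[/eqP -> //|/eqP ->].
  by rewrite eqxx.
move=> ->; apply/eigenvalueP; exists (delta_mx 0 (Ordinal n_gt0)).
  by rewrite mul_mx_scalar.
by apply/eqP => /matrixP/(_ 0 (Ordinal n_gt0)); rewrite !mxE !eqxx => /eqP; rewrite oner_eq0.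
Qed.

Lemma sigma_max_isometry m n (V : 'M[R]_(m, n)) : (0 < n)%N ->
  V^T *m V = 1%:M -> sigma_max V = 1.
Proof. by move=> n_gt0 VTV; rewrite /sigma_max VTV lambda_max_scalar ?sqrtr1. Qed.

Section Gram.
Variables (m n : nat) (U : 'M[R]_(m, n)).
Hypothesis n_gt0 : (0 < n)%N.

Let rho := rayleigh_sup U.

Lemma ubound_rayleigh :
  ubound [set frob (U *m x) ^+ 2 | x in [set x : 'cV[R]_n | frob x = 1]] (frob U ^+ 2).
Proof.
move=> _ [x /= x1 <-]; have := opbound_frob U x; rewrite x1 mulr1 => Ux_le.
by rewrite lerXn2r ?nnegrE ?(frob_ge0 (U *m x)) ?(frob_ge0 U).
Qed.

Lemma has_sup_rayleigh :
  has_sup [set frob (U *m x) ^+ 2 | x in [set x : 'cV[R]_n | frob x = 1]].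
Proof.
split.
  pose e : 'cV[R]_n := delta_mx (Ordinal n_gt0) 0.
  exists (frob (U *m e) ^+ 2), e => //=.
  by rewrite /frob trmx_delta mul_delta_mx /mxtrace big_ord1 mxE !eqxx sqrtr1.
by exists (frob U ^+ 2); exact: ubound_rayleigh.
Qed.

Lemma rayleigh_sup_ge (x : 'cV[R]_n) : frob x = 1 -> frob (U *m x) ^+ 2 <= rho.
Proof. by move=> x1; apply: sup_upper_bound has_sup_rayleigh _ _; exists x. Qed.

Lemma rayleigh_sup_ge0 : 0 <= rho.
Proof.
have [_ [x /= x1 _]] := has_sup_rayleigh.1.
exact: le_trans (sqr_ge0 _) (rayleigh_sup_ge x1).
Qed.

Lemma rayleigh_sup_le_frob : rho <= frob U ^+ 2.
Proof.
by apply: ge_sup; [exact: has_sup_rayleigh.1 | exact: ubound_rayleigh].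
Qed.

Lemma rayleigh_sup_bound (x : 'cV[R]_n) : frob (U *m x) ^+ 2 <= rho * frob x ^+ 2.
Proof.
have [->|x_neq0] := eqVneq x 0; first by rewrite mulmx0 !frob0 expr0n /= mulr0.
have fx_gt0 : 0 < frob x by rewrite lt_def frob_eq0 x_neq0 frob_ge0.
have := rayleigh_sup_ge (x := (frob x)^-1 *: x).
rewrite -scalemxAr !frobZ ger0_norm ?invr_ge0 ?frob_ge0 // mulVf ?gt_eqF // => /(_ erefl).
by rewrite exprMn exprVn ler_pdivrMl ?exprn_gt0 // mulrC.
Qed.

Lemma eigenvalue_rayleigh_sup : eigenvalue (U^T *m U) rho.
Proof.
set B := rho%:M - U^T *m U.
have BT : B^T = B by rewrite /B linearB /= tr_scalar_mx trmx_mul trmxK.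
have formB x : frobdot x (B *m x) = rho * frob x ^+ 2 - frob (U *m x) ^+ 2.
  by rewrite mulmxBl frobdotDr frobdotNr mul_scalar_mx frobdotZr -mulmxA -frobdot_mull !frob_sqr.
have B_bound : forall x : 'cV[R]_n, frob (B *m x) ^+ 2 <= rho * frobdot x (B *m x).
  apply: frob_mulmx_psd BT rayleigh_sup_ge0 _ => y.
  by rewrite formB subr_ge0 rayleigh_sup_bound lerBlDr lerDl sqr_ge0.
have [/eqP/det0P[v v_neq0 vB0]|detB_neq0] := eqVneq (\det B) 0.
  apply/eigenvalueP; exists v => //.
  by move/eqP: vB0; rewrite /B mulmxBr mul_mx_scalar subr_eq0 => /eqP <-.
exfalso; set K := frob (invmx B) ^+ 2 * rho.
have K_ge0 : 0 <= K by rewrite mulr_ge0 ?sqr_ge0 ?rayleigh_sup_ge0.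
have eps_gt0 : 0 < (K + 1)^-1 by rewrite invr_gt0 ltr_wpDl.
have [_ [x /= x1 <-]] := sup_adherent eps_gt0 has_sup_rayleigh.
rewrite -/(rayleigh_sup U) -/rho => Ux_big.
have x_le : frob x <= frob (invmx B) * frob (B *m x).
  by rewrite -{1}(mulKmx (_ : B \in unitmx) x) ?opbound_frob // unitmxE unitfE.
have : 1 <= K * frobdot x (B *m x).
  have : 1 ^+ 2 <= (frob (invmx B) * frob (B *m x)) ^+ 2.
    by rewrite lerXn2r ?nnegrE ?mulr_ge0 ?frob_ge0 // -x1.
  rewrite expr1n exprMn => /le_trans; apply.
  by rewrite /K -mulrA ler_wpM2l ?sqr_ge0 ?B_bound.
rewrite formB x1 expr1n mulr1.
have K1_gt0 : 0 < K + 1 by rewrite ltr_wpDl.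
have : (K + 1)^-1 * (K + 1) = 1 by rewrite mulVf ?gt_eqF.
nra.
Qed.

Lemma eigenvalue_le_rayleigh_sup a : eigenvalue (U^T *m U) a -> a <= rho.
Proof.
move=> /eigenvalueP[v vA v_neq0]; set x := v^T.
have Ax : U^T *m U *m x = a *: x.
  by rewrite /x -[U^T *m U]trmxK trmx_mul !trmxK -trmx_mul vA linearZ.
have fx_gt0 : 0 < frob x ^+ 2.
  by rewrite exprn_gt0 // lt_def frob_eq0 trmx_eq0 v_neq0 frob_ge0.
have := rayleigh_sup_bound x.
by rewrite frob_sqr frobdot_mull mulmxA Ax frobdotZr -frob_sqr ler_pM2r.
Qed.

Lemma lambda_max_gram : lambda_max (U^T *m U) = rho.
Proof.
apply/eqP; rewrite eq_le; apply/andP; split.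
  apply: ge_sup; first by exists rho; exact: eigenvalue_rayleigh_sup.
  by move=> a; exact: eigenvalue_le_rayleigh_sup.
apply: ub_le_sup; last exact: eigenvalue_rayleigh_sup.
by exists rho => a; exact: eigenvalue_le_rayleigh_sup.
Qed.

Lemma opbound_sigma_max : opbound U (sigma_max U).
Proof.
apply: opbound_col; first exact: sqrtr_ge0.
move=> x; rewrite -(ler_pXn2r (n:=2)) ?nnegrE ?mulr_ge0 ?frob_ge0 ?sqrtr_ge0 //.
by rewrite exprMn /sigma_max lambda_max_gram (sqr_sqrtr rayleigh_sup_ge0) rayleigh_sup_bound.
Qed.

Lemma sigma_max_le_frob : sigma_max U <= frob U.
Proof.
rewrite /sigma_max lambda_max_gram -(ler_pXn2r (n:=2)) ?nnegrE ?sqrtr_ge0 ?frob_ge0 //.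
by rewrite (sqr_sqrtr rayleigh_sup_ge0) rayleigh_sup_le_frob.
Qed.

End Gram.
End SpectralNorm.

Lemma sigma_max_le_sup_ball (R : realType) m n (V U : 'M[R]_(m, n)) r :
  (0 < n)%N -> mball V r U -> sigma_max U <= sup [set sigma_max W | W in mball V r].
Proof.
move=> n_gt0 VrU; apply: ub_le_sup; last by exists U.
exists (r + frob V) => _ [W VrW <-]; apply: le_trans (sigma_max_le_frob W n_gt0) _.
by rewrite -[W](subrK V); apply: le_trans (frobD _ _) _; rewrite lerD2r.
Qed.

Section LipschitzOpA.
Variables (R : realType) (Ng N : nat) (H : 'M[R]_Ng) (a h : R).
Hypotheses (H_sym : H^T = H) (a_ge0 : 0 <= a) (h_ge0 : 0 <= h) (Hh : opbound H h).
Variables Ui Uj : 'M[R]_(Ng, N).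
Hypotheses (Uia : opbound Ui a) (Uja : opbound Uj a).

Let D := Ui - Uj.
Let UiT_a : opbound Ui^T a := opbound_tr a_ge0 Uia.
Let UjT_a : opbound Uj^T a := opbound_tr a_ge0 Uja.

Lemma opAE (U : 'M[R]_(Ng, N)) : opA H U = H *m U *m U^T - U *m (U^T *m H).
Proof. by rewrite /opA trmx_mul H_sym. Qed.

Let frob_trD : frob (Ui^T - Uj^T) <= frob D.
Proof. by rewrite -linearB frob_tr. Qed.

Let frob_HD : frob (H *m Ui - H *m Uj) <= h * frob D.
Proof. by rewrite -mulmxBr Hh. Qed.

Let frob_trDH : frob (Ui^T *m H - Uj^T *m H) <= h * frob D.
Proof.
rewrite -mulmxBl; apply: le_trans (opbound_mulmxr _ (_ : opbound H^T h)) _.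
  by rewrite H_sym.
by rewrite -linearB frob_tr.
Qed.

Lemma opA_mulmx_lipschitz :
  frob (opA H Ui *m Ui - opA H Uj *m Uj) <= 6%:R * a ^+ 2 * h * frob D.
Proof.
have ah_ge0 := mulr_ge0 a_ge0 h_ge0; have ha_ge0 := mulr_ge0 h_ge0 a_ge0.
rewrite !opAE !mulmxBl subrACA; apply: le_trans (frobB _ _) _.
have := frob_mulmx3B ha_ge0 a_ge0 a_ge0 (opbound_mulmx h_ge0 Hh Uja) UiT_a UjT_a Uia
  frob_HD frob_trD (lexx (frob D)).
have := frob_mulmx3B a_ge0 ah_ge0 a_ge0 Uja (opbound_mulmx a_ge0 UiT_a Hh)
  (opbound_mulmx a_ge0 UjT_a Hh) Uia (lexx (frob D)) frob_trDH (lexx (frob D)).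
lra.
Qed.

Lemma opA_lipschitz : frob (opA H Ui - opA H Uj) <= 4%:R * a * h * frob D.
Proof.
have ah_ge0 := mulr_ge0 a_ge0 h_ge0; have ha_ge0 := mulr_ge0 h_ge0 a_ge0.
rewrite !opAE subrACA; apply: le_trans (frobB _ _) _.
have := frob_mulmxB ha_ge0 a_ge0 (opbound_mulmx h_ge0 Hh Uja) UiT_a frob_HD frob_trD.
have := frob_mulmxB a_ge0 ah_ge0 Uja (opbound_mulmx a_ge0 UiT_a Hh)
  (lexx (frob D)) frob_trDH.
lra.
Qed.

End LipschitzOpA.

Lemma normr_le_max_ends (R : realDomainType) (a b x : R) :
  a <= x <= b -> `|x| <= Num.max `|a| `|b|.
Proof.
move=> /andP[ax xb]; rewrite ler_norml.
have := ler_norm b; have := ler_norm (- a); rewrite normrN.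
have : `|a| <= Num.max `|a| `|b| by rewrite le_max lexx.
have : `|b| <= Num.max `|a| `|b| by rewrite le_max lexx orbT.
lra.
Qed.

Theorem lemma4p4 (R : realType) (Ng N : nat) (H : 'M[R]_Ng) (lam : nat -> R)
  (Vs : 'M[R]_(Ng, N)) (eta_a eta_b delta : R) :
  (0 < N)%N -> (N < Ng)%N ->
  (* H self-adjoint with eigenvalues lam 1 <= ... <= lam Ng (with multiplicity) *)
  H^T = H ->
  (exists P : 'M[R]_Ng, P^T *m P = 1%:M /\
     H = P *m diag_mx (\row_(i < Ng) lam i.+1) *m P^T) ->
  (forall i j : nat, (1 <= i)%N -> (i <= j)%N -> (j <= Ng)%N -> lam i <= lam j) ->
  lam 1%N < 0 ->
  lam N < lam N.+1 ->
  Vs^T *m Vs = 1%:M ->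
  H *m Vs = Vs *m diag_mx (\row_(j < N) lam j.+1) ->
  0 < eta_a -> 0 < eta_b -> 0 < delta ->
  (exists gh, ghat_prop H Vs eta_a eta_b delta gh /\
     forall gh', ghat_prop H Vs eta_a eta_b delta gh' ->
       forall U s, mball Vs eta_a U -> 0 <= s <= delta -> gh' U s = gh U s) ->
  let r := Num.max eta_a eta_b in
  let alpha := sup [set sigma_max U | U in mball Vs r] in
  let L := 6%:R * alpha ^+ 2 * Num.max `|lam 1%N| `|lam Ng| in
  let Lhat := (2%:R * L) / (3%:R * alpha) in
  forall Ui Uj, mball Vs r Ui -> mball Vs r Uj ->
    frob (opA H Ui *m Ui - opA H Uj *m Uj) <= L * frob (Ui - Uj) /\
    frob (opA H Ui - opA H Uj) <= Lhat * frob (Ui - Uj).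
Proof.
move=> N_gt0 _ H_sym [P [PTP HP]] lam_mono _ _ VsTVs _ eta_a_gt0 _ _ _.
move=> r alpha L Lhat Ui Uj Ui_r Uj_r; rewrite /Lhat /L; set h := Num.max _ _.
have h_ge0 : 0 <= h by rewrite le_max normr_ge0.
have Hh : opbound H h.
  rewrite HP; apply: opbound_orthodiag h_ge0 PTP _ => i; rewrite mxE.
  by apply: normr_le_max_ends; rewrite !lam_mono.
have alpha_ge1 : 1 <= alpha.
  rewrite -(sigma_max_isometry N_gt0 VsTVs); apply: sigma_max_le_sup_ball N_gt0 _.
  by rewrite /mball /= subrr frob0 le_max ltW.
have alpha_ge0 : 0 <= alpha := le_trans ler01 alpha_ge1.
have U_alpha U : mball Vs r U -> opbound U alpha.
  move=> U_r; apply: opbound_le (opbound_sigma_max U N_gt0) _.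
  exact: sigma_max_le_sup_ball N_gt0 U_r.
have Ui_a := U_alpha _ Ui_r; have Uj_a := U_alpha _ Uj_r.
(* Plain [exact]: the statement reaches [Num.max] and the ring operations
   through convertible but different instances, which [exact:] does not unify. *)
split; first exact (opA_mulmx_lipschitz H_sym alpha_ge0 h_ge0 Hh Ui_a Uj_a).
have -> : 2%:R * (6%:R * alpha ^+ 2 * h) / (3%:R * alpha) = 4%:R * alpha * h.
  by field; rewrite gt_eqF // (lt_le_trans ltr01).
exact (opA_lipschitz H_sym alpha_ge0 h_ge0 Hh Ui_a Uj_a).
Qed.
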